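(* Let $\mathcal M$ be a map in class $2_{\{0,1\}}$. Then no two distinct faces of $\mathcal M$ share two consecutive edges (i.e., there is no pair of distinct faces whose boundaries both contain a common path of two edges).
   Context: A map is a $2$-cell embedding of a connected simple graph (its underlying graph) in a closed surface; the components of the complement are the faces. All maps considered are polytopal: flags correspond bijectively to incident triples (vertex, edge, face). For a flag $\Phi$ and $i\in\{0,1,2\}$, $\Phi^i$ is the unique flag differing from $\Phi$ exactly in its vertex ($i=0$), edge ($i=1$) or face ($i=2$). $\mathrm{Aut}(\mathcal M)$ is the group of automorphisms of the underlying graph preserving the set of faces, acting on flags. A map is in class $2_{\{0,1\}}$ if $\mathrm{Aut}(\mathcal M)$ has exactly two orbits on flags and for every flag $\Phi$, the flags $\Phi^0,\Phi^1$ lie in the orbit of $\Phi$ while $\Phi^2$ does not. *)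

(* Maps are encoded combinatorially by their flags:
   a finite set of flags with the three involutions Phi |-> Phi^0, Phi^1, Phi^2. *)
From mathcomp Require Import all_boot all_fingroup.
Set Implicit Arguments. Unset Strict Implicit. Unset Printing Implicit Defensive.

Section Maps.
Variable Omega : finType.
Variables r0 r1 r2 : Omega -> Omega.

Definition same_vertex : rel Omega :=
  connect (fun x y => (y == r1 x) || (y == r2 x)).
Definition same_edge : rel Omega :=
  connect (fun x y => (y == r0 x) || (y == r2 x)).
Definition same_face : rel Omega :=
  connect (fun x y => (y == r0 x) || (y == r1 x)).
Definition flag_connected : Prop :=
  forall x y, connect (fun x y => [|| y == r0 x, y == r1 x | y == r2 x]) x y.

(* a map on a closed surface whose underlying graph is connected and simple *)
Definition is_map : Prop :=
  (forall x, r0 (r0 x) = x /\ r1 (r1 x) = x /\ r2 (r2 x) = x) /\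
  (forall x, r0 x <> x /\ r1 x <> x /\ r2 x <> x) /\
  (forall x, r0 (r2 x) = r2 (r0 x) /\ r0 (r2 x) <> x) /\
  flag_connected /\
  (* no loops *)
  (forall x, ~~ same_vertex x (r0 x)) /\
  (* no multiple edges *)
  (forall x y, same_vertex x y -> same_vertex (r0 x) (r0 y) ->
               same_edge x y).

(* flags correspond bijectively to incident (vertex, edge, face) triples *)
Definition polytopal : Prop :=
  (forall x y, same_vertex x y -> same_edge x y -> same_face x y -> x = y) /\
  (forall a b c, same_edge a b -> same_vertex a c -> same_face b c ->
     exists x, [/\ same_vertex x a, same_edge x a & same_face x b]).

Definition is_aut (g : {perm Omega}) : Prop :=
  forall x, g (r0 x) = r0 (g x) /\ g (r1 x) = r1 (g x) /\ g (r2 x) = r2 (g x).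

Definition same_orbit (x y : Omega) : Prop :=
  exists g : {perm Omega}, is_aut g /\ g x = y.

Definition class2_01 : Prop :=
  (exists a b, ~ same_orbit a b /\ forall x, same_orbit a x \/ same_orbit b x) /\
  (forall x, same_orbit x (r0 x) /\ same_orbit x (r1 x) /\ ~ same_orbit x (r2 x)).

(* two distinct faces (of x and y) whose boundaries both contain the
   two-edge path formed by the consecutive edges (of x and r1 x) at the
   common vertex *)
Definition share_two_consecutive_edges : Prop :=
  exists x y, [/\ ~~ same_face x y, same_vertex x y, ~~ same_edge x (r1 x),
                  same_edge x y & same_edge (r1 x) (r1 y)].

End Maps.

(* If two distinct faces share the two consecutive edges of the flags x and
   r1 x at a vertex, the faces are those of x and r2 x, and r1 and r2 commute
   at x.  Automorphisms transport this commutation along the orbit of x, and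
   since r2 swaps the two flag orbits it transports it to the other orbit as
   well.  So r1 and r2 commute everywhere, which makes r2 itself an
   automorphism; but r2 must move every flag to the other orbit. *)
From mathcomp Require Import all_boot all_fingroup.
Set Implicit Arguments. Unset Strict Implicit. Unset Printing Implicit Defensive.

Lemma involutive_rel_sym (T : eqType) (f g : T -> T) :
  involutive f -> involutive g -> symmetric (fun x y => (y == f x) || (y == g x)).
Proof.
move=> fK gK x y; apply/orP/orP => -[/eqP->|/eqP->];
  by [left; rewrite fK | right; rewrite gK].
Qed.

Section Flags.
Variables (Omega : finType) (r0 r1 r2 : Omega -> Omega).
Hypotheses (r0K : involutive r0) (r1K : involutive r1) (r2K : involutive r2).

Lemma same_vertexC u w : same_vertex r1 r2 u w = same_vertex r1 r2 w u.
Proof. by apply: sym_connect_sym; apply: involutive_rel_sym. Qed.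

Lemma same_vertex_r1 u : same_vertex r1 r2 u (r1 u).
Proof. by apply: connect1; rewrite eqxx. Qed.

Lemma same_vertex_r2 u : same_vertex r1 r2 u (r2 u).
Proof. by apply: connect1; rewrite eqxx orbT. Qed.

Hypothesis r02C : forall x, r0 (r2 x) = r2 (r0 x).

Lemma same_edge_sub u w :
  same_edge r0 r2 u w -> w \in [:: u; r0 u; r2 u; r2 (r0 u)].
Proof.
have closedE : closed (fun x y => (y == r0 x) || (y == r2 x)) [:: u; r0 u; r2 u; r2 (r0 u)].
  apply: intro_closed; first exact: sym_connect_sym (involutive_rel_sym r0K r2K).
  move=> s t /orP[] /eqP-> /[!inE] /or4P[] /eqP->;
    by rewrite -?r02C ?r0K ?r2K ?eqxx ?orbT.
by move/(closed_connect closedE) <-; rewrite inE eqxx.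
Qed.

Hypothesis loopless : forall x, ~~ same_vertex r1 r2 x (r0 x).

Lemma same_vertex_edge u w :
  same_vertex r1 r2 u w -> same_edge r0 r2 u w -> w = u \/ w = r2 u.
Proof.
move=> uw /same_edge_sub /[!inE] /or4P[] /eqP wE; subst w; [by left | | by right | ].
- by rewrite (negbTE (loopless u)) in uw.
- case/negP: (loopless u).
  have rv : same_vertex r1 r2 (r2 (r0 u)) (r0 u) by rewrite same_vertexC same_vertex_r2.
  exact: connect_trans uw rv.
Qed.

Lemma r1r2_commute_of_shared_edges x y : x != y ->
    same_vertex r1 r2 x y -> same_edge r0 r2 x y ->
    same_edge r0 r2 (r1 x) (r1 y) ->
  r1 (r2 x) = r2 (r1 x).
Proof.
move=> /negPf neq_xy xy /(same_vertex_edge xy)[yx|y2x]; first by rewrite yx eqxx in neq_xy.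
subst y => rxy.
have r1x_x : same_vertex r1 r2 (r1 x) x by rewrite same_vertexC same_vertex_r1.
have v_r1 := connect_trans (connect_trans r1x_x (same_vertex_r2 x)) (same_vertex_r1 (r2 x)).
case: (same_vertex_edge v_r1 rxy) => // /(congr1 r1); rewrite !r1K => x2x.
by rewrite x2x eqxx in neq_xy.
Qed.

End Flags.

Section Automorphisms.
Variables (Omega : finType) (r0 r1 r2 : Omega -> Omega).
Local Open Scope group_scope.

Lemma is_autV g : is_aut r0 r1 r2 g -> is_aut r0 r1 r2 g^-1.
Proof.
move=> autg x; have [g0 [g1 g2]] := autg (g^-1 x).
by rewrite permKV in g0 g1 g2; split; [|split]; apply: (@perm_inj _ g); rewrite permKV.
Qed.

Lemma is_autM g h : is_aut r0 r1 r2 g -> is_aut r0 r1 r2 h -> is_aut r0 r1 r2 (g * h).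
Proof.
move=> autg auth x; rewrite !permM.
by have [-> [-> ->]] := autg x; have [-> [-> ->]] := auth (g x).
Qed.

Lemma same_orbit_sym x y : same_orbit r0 r1 r2 x y -> same_orbit r0 r1 r2 y x.
Proof. by case=> g [autg <-]; exists g^-1; rewrite permK; split=> //; apply: is_autV. Qed.

Lemma same_orbit_trans x y z :
  same_orbit r0 r1 r2 x y -> same_orbit r0 r1 r2 y z -> same_orbit r0 r1 r2 x z.
Proof.
case=> g [autg <-] [h [auth <-]].
by exists (g * h); rewrite permM; split=> //; apply: is_autM.
Qed.

Lemma same_orbit_two_classes a b x y z :
    (forall t, same_orbit r0 r1 r2 a t \/ same_orbit r0 r1 r2 b t) ->
    ~ same_orbit r0 r1 r2 x y ->
  same_orbit r0 r1 r2 x z \/ same_orbit r0 r1 r2 y z.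
Proof.
move=> cover nxy.
have link u v w : same_orbit r0 r1 r2 u v -> same_orbit r0 r1 r2 u w ->
    same_orbit r0 r1 r2 v w.
  by move/same_orbit_sym; apply: same_orbit_trans.
by case: (cover x) (cover y) (cover z) => ox [] oy [] oz;
  first [ by left; apply: link ox oz | by right; apply: link oy oz
        | by case: nxy; apply: link ox oy ].
Qed.

Lemma same_orbit_r1r2_commute x z : same_orbit r0 r1 r2 x z ->
  r1 (r2 x) = r2 (r1 x) -> r1 (r2 z) = r2 (r1 z).
Proof.
case=> g [autg <-] c12x.
have [_ [g1 g2]] := autg x; have [_ [g1' _]] := autg (r2 x); have [_ [_ g2']] := autg (r1 x).
by rewrite -g2 -g1' c12x g2' g1.
Qed.

Lemma r2_is_aut (r2K : involutive r2) :
    (forall x, r0 (r2 x) = r2 (r0 x)) -> (forall x, r1 (r2 x) = r2 (r1 x)) ->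
  is_aut r0 r1 r2 (perm (inv_inj r2K)).
Proof. by move=> r02C r12C x; rewrite !permE r02C r12C. Qed.

End Automorphisms.

Theorem corollary2p6 (Omega : finType) (r0 r1 r2 : Omega -> Omega) :
  is_map r0 r1 r2 -> polytopal r0 r1 r2 -> class2_01 r0 r1 r2 ->
  ~ share_two_consecutive_edges r0 r1 r2.
Proof.
move=> [invs [_ [r02 [_ [loopless _]]]]] _ [[a [b [_ cover]]] cls]
  [x [y [fxy vxy _ exy e1xy]]].
have r0K : involutive r0 by move=> t; case: (invs t).
have r1K : involutive r1 by move=> t; case: (invs t) => _ [].
have r2K : involutive r2 by move=> t; case: (invs t) => _ [].
have r02C t : r0 (r2 t) = r2 (r0 t) by case: (r02 t).
have neq_xy : x != y by apply: contraNneq fxy => ->; apply: connect0.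
have c12x := r1r2_commute_of_shared_edges r0K r1K r2K r02C loopless neq_xy vxy exy e1xy.
have not_x_r2x : ~ same_orbit r0 r1 r2 x (r2 x) by case: (cls x) => _ [].
have r12C z : r1 (r2 z) = r2 (r1 z).
  case: (same_orbit_two_classes z cover not_x_r2x) => /same_orbit_r1r2_commute; apply=> //.
  by rewrite c12x !r2K.
by apply: not_x_r2x; exists (perm (inv_inj r2K)); rewrite permE; split=> //; apply: r2_is_aut.
Qed.
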